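(* Let $K\ge 2$, $k\ge 2$ and $n\ge1$ be integers, let $\gamma>0$, and let $C_1\subseteq[K]^n$ be a code (with at least two codewords) with $\mathrm{LCS}(C_1)=\gamma n$. Then there exist an integer $T=T(K,\gamma,k)$ satisfying $T\le 32\cdot(2k/\gamma)^K$ and an injective map $\tau\colon[K]\to[k]^T$ such that the code $C_2\subseteq[k]^N$, $N=nT$, obtained by replacing each symbol of each codeword of $C_1$ by its image under $\tau$, has the following property: if $s$ is a common subsequence between two distinct codewords $c,\tilde c\in C_2$, then \[\operatorname{span} s\ \ge\ (k+1)\operatorname{len} s-4\gamma kN.\] In particular, $\mathrm{LCS}(C_2)\le\frac{2+4\gamma k}{k+1}N<\left(\frac{2}{k+1}+4\gamma\right)N$.
   Context: $[k]=\{1,\dots,k\}$. Symbols in words are treated as distinguishable positions. A subsequence of a word $w$ is obtained by deleting symbols; a subword is a subsequence of consecutive symbols. The span $\operatorname{span}_w w'$ of a subsequence $w'$ of $w$ is the length of the shortest subword of $w$ containing $w'$. A common subsequence of words $w_1,w_2$ is a pair $s=(w_1',w_2')$ of subsequences of $w_1$ and $w_2$ respectively that are equal as words; $\operatorname{len} s$ is their common length and $\operatorname{span} s=\operatorname{span}_{w_1}w_1'+\operatorname{span}_{w_2}w_2'$. $\mathrm{LCS}(w_1,w_2)$ is the maximum length of a common subsequence, and $\mathrm{LCS}(C)=\max_{c_1\ne c_2\in C}\mathrm{LCS}(c_1,c_2)$ for a code $C$. *)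

From mathcomp Require Import all_boot all_order all_algebra.
Set Implicit Arguments. Unset Strict Implicit. Unset Printing Implicit Defensive.

(* A subsequence of a word w is represented by a mask m : bitseq with
   size m = size w (positions are distinguishable). *)

Definition positions (m : bitseq) : seq nat :=
  [seq i <- iota 0 (size m) | nth false m i].

Definition span_mask (m : bitseq) : nat :=
  if positions m is x :: s then (last x s - x).+1 else 0.

Definition is_common_subseq (T : eqType) (w1 w2 : seq T) (m1 m2 : bitseq) : bool :=
  [&& size m1 == size w1, size m2 == size w2 & mask m1 w1 == mask m2 w2].

Definition cs_len (T : eqType) (w1 : seq T) (m1 : bitseq) : nat := size (mask m1 w1).
Definition cs_span (m1 m2 : bitseq) : nat := span_mask m1 + span_mask m2.

Definition LCS (T : eqType) (w1 w2 : seq T) : nat :=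
  \max_(m1 : (size w1).-tuple bool) \max_(m2 : (size w2).-tuple bool)
     (if mask m1 w1 == mask m2 w2 then size (mask m1 w1) else 0).

Definition LCS_code (T : eqType) (C : seq (seq T)) : nat :=
  \max_(c1 <- C) \max_(c2 <- C | c2 != c1) LCS c1 c2.

Definition encode (K k T : nat) (tau : 'I_K -> T.-tuple 'I_k) (c : seq 'I_K) : seq 'I_k :=
  flatten [seq val (tau a) | a <- c].

From mathcomp Require Import all_boot all_order all_algebra.
From mathcomp Require Import zify lra.
From Stdlib Require Import Classical_Prop.
Set Implicit Arguments. Unset Strict Implicit. Unset Printing Implicit Defensive.

(* Symbol a is encoded by the word tau a of length T = k M^(K-1) that cycles
   through the k letters in runs of length M^a, where M is about 2k/gamma.
   A common subsequence of two encoded codewords is a chain of matched position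
   pairs (p, q). Along it a potential, essentially M (p + q) plus bonuses for
   progress inside runs and blocks, grows by M (k+1) per matched pair: to match
   letters again inside runs of different lengths, the shorter run must cycle
   through all k letters or the longer run must be left. Only pairs in two blocks
   encoding the same symbol of C1 may gain just 2M; there are at most 2T of them
   per pair of blocks, and these block pairs form a common subsequence of the
   original codewords, so there are at most 2 T gamma n of them. The final
   potential is about M times the span, which yields
   span >= (k+1) len - 4 gamma k N; since the span is at most 2N, the LCS bounds
   follow. *)

(** * Chains of position pairs *)

Definition both_lt (x y : nat * nat) := (x.1 < y.1) && (x.2 < y.2).

Lemma both_lt_trans : transitive both_lt.
Proof.
by move=> y x z /andP[lt1 lt2] /andP[lt3 lt4]; rewrite /both_lt (ltn_trans lt1) ?(ltn_trans lt2).
Qed.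

Lemma sorted_both_lt_fst s : sorted both_lt s -> sorted ltn (map fst s).
Proof. by move=> s_sorted; rewrite sorted_map; apply: sub_sorted s_sorted => x y /andP[]. Qed.

Lemma sorted_both_lt_snd s : sorted both_lt s -> sorted ltn (map snd s).
Proof. by move=> s_sorted; rewrite sorted_map; apply: sub_sorted s_sorted => x y /andP[]. Qed.

Lemma path_both_lt_last x s : path both_lt x s ->
  x.1 <= (last x s).1 /\ x.2 <= (last x s).2.
Proof.
move=> x_path; have := mem_last x s; rewrite inE => /orP[/eqP ->|]; first by split.
by move=> /(allP (order_path_min both_lt_trans x_path)) /andP[/ltnW le1 /ltnW le2].
Qed.

Lemma count_block_le (T i : nat) (l : seq nat) : 0 < T -> sorted ltn l ->
  count (fun a => a %/ T == i) l <= T.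
Proof.
move=> T_gt0 l_sorted; rewrite -size_filter.
have uniq_blk : uniq [seq a <- l | a %/ T == i].
  by apply/filter_uniq/(sorted_uniq ltn_trans ltnn).
have := uniq_leq_size uniq_blk (s2 := iota (i * T) T); rewrite size_iota; apply=> a.
rewrite mem_filter mem_iota => /andP[/eqP a_blk _].
have := divn_eq a T; have := ltn_mod a T; rewrite T_gt0 a_blk.
by move: (a %% T) => o; lia.
Qed.

Lemma sub_in_count (T : eqType) (a1 a2 : pred T) (s : seq T) :
  {in s, subpred a1 a2} -> count a1 s <= count a2 s.
Proof.
elim: s => //= y s IH sub.
apply: leq_add; last by apply: IH => z z_s; apply: sub; rewrite inE z_s orbT.
by case a1y: (a1 y) => //=; rewrite (sub y) ?mem_head.
Qed.

Lemma count_split (T : Type) (a p : pred T) (s : seq T) :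
  count a s <= count a (filter p s) + count (predC p) s.
Proof.
rewrite count_filter -count_predUI; apply: leq_trans (leq_addr _ _).
by apply: sub_count => y /= ->; case: (p y).
Qed.

Definition later_blocks (T : nat) (x y : nat * nat) :=
  (x.1 %/ T < y.1 %/ T) && (x.2 %/ T < y.2 %/ T).

(* Pairs after x that are not in strictly later blocks on both sides share
   a block with x on one side; a block holds at most T positions and x
   already uses one of them on the first side. *)
Lemma count_not_later_blocks (T : nat) (x : nat * nat) (s : seq (nat * nat)) :
  0 < T -> path both_lt x s -> count (predC (later_blocks T x)) s < 2 * T.
Proof.
move=> T_gt0 x_path.
have x_lt := order_path_min both_lt_trans x_path.
pose same1 (y : nat * nat) := y.1 %/ T == x.1 %/ T.
pose same2 (y : nat * nat) := y.2 %/ T == x.2 %/ T.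
have near : count (predC (later_blocks T x)) s <= count same1 s + count same2 s.
  rewrite -count_predUI; apply: leq_trans (leq_addr _ _).
  apply: sub_in_count => y /(allP x_lt) /andP[lt1 lt2].
  have le1 : x.1 %/ T <= y.1 %/ T by apply/leq_div2r/ltnW.
  have le2 : x.2 %/ T <= y.2 %/ T by apply/leq_div2r/ltnW.
  rewrite /= /later_blocks /same1 /same2 negb_and -!leqNgt.
  by case/orP=> ge; apply/orP; [left|right]; rewrite eqn_leq ge.
have count1 : (count same1 s).+1 <= T.
  have := count_block_le (x.1 %/ T) T_gt0 (sorted_both_lt_fst (x_path : sorted both_lt (x :: s))).
  by rewrite /= eqxx count_map.
have count2 : count same2 s <= T.
  have := count_block_le (x.2 %/ T) T_gt0 (sorted_both_lt_snd (x_path : sorted both_lt (x :: s))).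
  by rewrite /= count_map; apply: leq_trans; apply: leq_addl.
by move: near count1 count2; clear; lia.
Qed.

(* Greedy extraction: keep the first pair whose two blocks carry the same
   symbol, discard everything not in strictly later blocks on both sides
   (fewer than 2T pairs), and recurse. *)
Lemma same_block_chain (T : nat) (c1 c2 : nat -> nat) (s : seq (nat * nat)) :
  0 < T -> sorted both_lt s ->
  exists I J : seq nat, [/\ sorted ltn I /\ sorted ltn J, map c1 I = map c2 J,
     {subset I <= [seq y.1 %/ T | y <- s]}, {subset J <= [seq y.2 %/ T | y <- s]} &
     count (fun y => c1 (y.1 %/ T) == c2 (y.2 %/ T)) s <= 2 * T * size I].
Proof.
move=> T_gt0; elim: {s}(size s).+1 {-2}s (ltnSn (size s)) => // m IH [|x s] s_size x_path.
  by exists [::], [::].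
have s_sorted := path_sorted x_path.
have [same|diff] := boolP (c1 (x.1 %/ T) == c2 (x.2 %/ T)); last first.
  have [I [J [IJ_sorted IJ_eq I_sub J_sub cnt]]] := IH s s_size s_sorted.
  exists I, J; split => //.
  - by move=> a /I_sub a_in; rewrite /= inE a_in orbT.
  - by move=> a /J_sub a_in; rewrite /= inE a_in orbT.
  - by rewrite /= (negbTE diff).
pose s' := filter (later_blocks T x) s.
have s'_size : size s' < m by rewrite size_filter (leq_ltn_trans (count_size _ _)).
have s'_sorted : sorted both_lt s' by apply: sorted_filter s_sorted; exact: both_lt_trans.
have [I [J [[I_sorted J_sorted] IJ_eq I_sub J_sub cnt]]] := IH s' s'_size s'_sorted.
have I_later a : a \in I -> x.1 %/ T < a.
  by move/I_sub/mapP=> [y]; rewrite mem_filter => /andP[/andP[]]; move=> ? _ _ ->.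
have J_later a : a \in J -> x.2 %/ T < a.
  by move/J_sub/mapP=> [y]; rewrite mem_filter => /andP[/andP[]]; move=> _ ? _ ->.
exists (x.1 %/ T :: I), (x.2 %/ T :: J); split.
- rewrite /= !path_sortedE; try exact: ltn_trans.
  by rewrite I_sorted J_sorted !andbT; split; apply/allP.
- by rewrite /= IJ_eq (eqP same).
- move=> a; rewrite !inE => /orP[->//|/I_sub/mapP[y]].
  move=> /[swap] ->; rewrite mem_filter => /andP[_ y_s].
  by rewrite (map_f (fun y : nat * nat => y.1 %/ T) y_s) orbT.
- move=> a; rewrite !inE => /orP[->//|/J_sub/mapP[y]].
  move=> /[swap] ->; rewrite mem_filter => /andP[_ y_s].
  by rewrite (map_f (fun y : nat * nat => y.2 %/ T) y_s) orbT.
- have := count_split (fun y => c1 (y.1 %/ T) == c2 (y.2 %/ T)) (later_blocks T x) s.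
  have := count_not_later_blocks T_gt0 x_path.
  rewrite /= same -/s' mulnS; move: cnt; clear; lia.
Qed.

(** * Common subsequences as chains *)

Lemma positions_mask m : positions m = mask m (iota 0 (size m)).
Proof. by rewrite /positions filter_mask; congr mask; rewrite -{3}(mkseq_nth false m). Qed.

Lemma map_nth_positions (A : Type) (x0 : A) (w : seq A) m : size m = size w ->
  map (nth x0 w) (positions m) = mask m w.
Proof. by move=> size_m; rewrite positions_mask map_mask size_m -/(mkseq _ _) mkseq_nth. Qed.

Lemma sorted_positions m : sorted ltn (positions m).
Proof. by rewrite positions_mask (subseq_sorted ltn_trans (mask_subseq _ _)) ?iota_ltn_sorted. Qed.

Lemma positions_lt m p : p \in positions m -> p < size m.
Proof. by rewrite positions_mask => /mem_mask; rewrite mem_iota. Qed.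

Lemma span_mask_le m : span_mask m <= size m.
Proof.
rewrite /span_mask; case e: (positions m) => [|x s] //.
by have := @positions_lt m (last x s); rewrite e mem_last => /(_ isT); lia.
Qed.

Lemma zip_sorted_both_lt (a b : seq nat) : sorted ltn a -> sorted ltn b -> size a = size b ->
  sorted both_lt (zip a b).
Proof.
case: a b => [|x a] [|y b] //= + + [].
elim: a b x y => [|x' a IH] [|y' b] //= x y /andP[lt1 a_path] /andP[lt2 b_path] [size_ab].
by rewrite /both_lt /= lt1 lt2 IH.
Qed.

Lemma all_zip (S U : Type) (a : pred S) (b : pred U) s t : all a s -> all b t ->
  all (fun y => a y.1 && b y.2) (zip s t).
Proof.
elim: s t => [|x s IH] [|y t] //= /andP[ax a_s] /andP[b_y b_t].
by rewrite ax b_y IH.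
Qed.

Definition match_pairs (m1 m2 : bitseq) := zip (positions m1) (positions m2).

Section CommonSubseq.
Variables (A : eqType) (x0 : A) (w1 w2 : seq A) (m1 m2 : bitseq).
Hypotheses (size_m1 : size m1 = size w1) (size_m2 : size m2 = size w2)
  (mask_eq : mask m1 w1 = mask m2 w2).

Lemma size_positions_eq : size (positions m1) = size (positions m2).
Proof.
have : map (nth x0 w1) (positions m1) = map (nth x0 w2) (positions m2).
  by rewrite (map_nth_positions x0 size_m1) (map_nth_positions x0 size_m2).
by move/(congr1 size); rewrite !size_map.
Qed.

Lemma size_match_pairs : size (match_pairs m1 m2) = size (mask m1 w1).
Proof.
by rewrite /match_pairs size1_zip -?(map_nth_positions x0 size_m1) ?size_map // size_positions_eq.
Qed.

Lemma sorted_match_pairs : sorted both_lt (match_pairs m1 m2).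
Proof. by rewrite zip_sorted_both_lt ?sorted_positions ?size_positions_eq. Qed.

Lemma match_pairs_matched :
  all (fun y => nth x0 w1 y.1 == nth x0 w2 y.2) (match_pairs m1 m2).
Proof.
have := map_nth_positions x0 size_m1; have := map_nth_positions x0 size_m2.
rewrite -mask_eq => <-; rewrite /match_pairs.
elim: (positions m1) (positions m2) => [|p a IH] [|q b] //= [eq_pq /IH ->].
by rewrite eq_pq eqxx.
Qed.

Lemma match_pairs_lt :
  all (fun y => (y.1 < size w1) && (y.2 < size w2)) (match_pairs m1 m2).
Proof.
rewrite -size_m1 -size_m2.
by apply: (all_zip (a := fun p => p < size m1) (b := fun p => p < size m2)); apply/allP=> p;
  exact: positions_lt.
Qed.

Lemma span_match_pairs x s : match_pairs m1 m2 = x :: s ->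
  span_mask m1 = ((last x s).1 - x.1).+1 /\ span_mask m2 = ((last x s).2 - x.2).+1.
Proof.
move=> pairs_eq.
have un1 : unzip1 (match_pairs m1 m2) = positions m1 by rewrite unzip1_zip // size_positions_eq.
have un2 : unzip2 (match_pairs m1 m2) = positions m2 by rewrite unzip2_zip // size_positions_eq.
by rewrite /span_mask -un1 -un2 pairs_eq /= !last_map.
Qed.

End CommonSubseq.

(** * The potential *)

Lemma cyclic_return_step (k1 r p p' : nat) : 0 < r -> p < p' ->
  (p %/ r) %% k1.+1 = (p' %/ r) %% k1.+1 ->
  p + k1 * (p %% r) + k1.+1 <= p' + k1 * (p' %% r).
Proof.
move=> r_gt0 lt_pp' same_sym.
have o_lt : p %% r < r by rewrite ltn_mod.
have o'_lt : p' %% r < r by rewrite ltn_mod.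
have le_run : p %/ r <= p' %/ r by apply: leq_div2r; apply: ltnW.
have p_eq := divn_eq p r; have p'_eq := divn_eq p' r.
move: (p %/ r) (p' %/ r) (p %% r) (p' %% r) p_eq p'_eq lt_pp' le_run same_sym o_lt o'_lt
  => u u' o o' -> -> lt_pp' le_run same_sym o_lt o'_lt.
have [eq_uu'|lt_uu'] := eqVneq u u'.
  subst u'; have lt_oo' : o < o' by lia.
  have := leq_mul (leqnn k1) lt_oo'; lia.
have far : u + k1.+1 <= u'.
  have lt_u : u < u' by rewrite ltn_neqAle lt_uu' le_run.
  have := eqn_mod_dvd k1.+1 le_run; rewrite same_sym eqxx => /esym /dvdn_leq.
  by rewrite subn_gt0 => /(_ lt_u); lia.
have := leq_mul far (leqnn r); have := leq_mul (leqnn k1) o_lt; lia.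
Qed.

(* Matching positions inside a run of length r1 on one side and a run of
   length r2 >= M r1 on the other: either the long run is left, which gains
   k1 r2 >= M k1 (offset + 1), or the short side cycles through all k1.+1
   symbols before matching again. *)
Lemma short_run_step (k1 M p q p' q' r1 r2 : nat) :
  0 < r1 -> 0 < r2 -> M * r1 <= r2 -> p < p' -> q < q' ->
  (p %/ r1) %% k1.+1 = (q %/ r2) %% k1.+1 -> (p' %/ r1) %% k1.+1 = (q' %/ r2) %% k1.+1 ->
  M * (p + q) + M * (k1 * (p %% r1)) + k1 * (r2 * (q %/ r2)) + M * k1.+2 <=
  M * (p' + q') + M * (k1 * (p' %% r1)) + k1 * (r2 * (q' %/ r2)).
Proof.
move=> r1_gt0 r2_gt0 Mr12 lt_pp' lt_qq' e e'.
have le_run2 : q %/ r2 <= q' %/ r2 by apply: leq_div2r; apply: ltnW.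
have [lt_run2|eq_run2] := ltnP (q %/ r2) (q' %/ r2); last first.
  have same_run2 : q %/ r2 = q' %/ r2 by apply/anti_leq; rewrite le_run2.
  have := cyclic_return_step r1_gt0 lt_pp' (k1 := k1).
  rewrite e e' same_run2 => /(_ erefl) cycle1.
  suff : M * (p + q) + M * (k1 * (p %% r1)) + M * k1.+2 <=
      M * (p' + q') + M * (k1 * (p' %% r1)) by clear; lia.
  rewrite -!mulnDr leq_mul2l; apply/orP; right; move: cycle1 lt_qq'; clear; lia.
have gain2 : r2 * (q %/ r2) + r2 <= r2 * (q' %/ r2) by rewrite -mulnSr leq_mul2l lt_run2 orbT.
have loss1 : M * (k1 * (p %% r1) + k1) <= k1 * r2.
  rewrite -mulnSr mulnCA leq_mul2l; apply/orP; right.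
  by apply: leq_trans Mr12; rewrite leq_mul2l ltn_mod r1_gt0 orbT.
have := leq_mul (leqnn k1) gain2.
have := leq_mul (leqnn M) lt_pp'; have := leq_mul (leqnn M) lt_qq'.
rewrite !mulnDr !mulnS in loss1 *.
move: (M * p) (M * p') (M * q) (M * q') (M * (k1 * (p %% r1))) (M * (k1 * (p' %% r1)))
  (k1 * (r2 * (q %/ r2))) (k1 * (r2 * (q' %/ r2))) (k1 * r2) (M * k1) loss1; clear; lia.
Qed.

Section Potential.
Variables (k1 M K T : nat).
Hypotheses (M_gt1 : 1 < M) (T_def : T = k1.+1 * M ^ K.-1).
Variables (c1 c2 : nat -> nat).
Hypotheses (c1_ltK : forall i, c1 i < K) (c2_ltK : forall i, c2 i < K).

(* A codeword of C1 is seen as c : nat -> nat and the alphabet size k is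
   k1.+1. Position p of its encoding lies in block p %/ T, which encodes the
   symbol c (p %/ T) by cycling through the alphabet in runs of length
   M ^ c (p %/ T). *)
Definition run_len (c : nat -> nat) p := M ^ c (p %/ T).
Definition enc_sym (c : nat -> nat) p := (p %/ run_len c p) %% k1.+1.
Definition run_start (c : nat -> nat) p := run_len c p * (p %/ run_len c p).

Definition offset_bonus p q :=
  if run_len c1 p < run_len c2 q then k1 * (p %% run_len c1 p)
  else if run_len c2 q < run_len c1 p then k1 * (q %% run_len c2 q) else 0.

Definition bonus_bound := k1 * M ^ (K - 2).

(* The offset bonus rewards progress inside the shorter of two runs of
   different lengths, run_start rewards leaving a run and the last term
   entering a new block. *)
Definition potential p q :=
  M * (p + q) + M * offset_bonus p q + k1 * (run_start c1 p + run_start c2 q)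
  + M * bonus_bound * (p %/ T + q %/ T).

Definition same_block p q : bool := c1 (p %/ T) == c2 (q %/ T).

Lemma T_gt0 : 0 < T.
Proof. by rewrite T_def muln_gt0 expn_gt0 (ltnW M_gt1). Qed.

Lemma run_len_gt0 c p : 0 < run_len c p.
Proof. by rewrite expn_gt0 (ltnW M_gt1). Qed.

Lemma run_len_dvdT c p : (forall i, c i < K) -> run_len c p %| T.
Proof.
move=> c_ltK; rewrite T_def; apply/dvdn_mull/dvdn_exp2l.
by have := c_ltK (p %/ T); case: K.
Qed.

Lemma run_len_ltE c c' p q :
  run_len c p < run_len c' q -> M * run_len c p <= run_len c' q.
Proof. by rewrite !ltn_exp2l // -expnS leq_exp2l. Qed.

Lemma run_len_lt_bound c c' p q : (forall i, c' i < K) ->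
  run_len c p < run_len c' q -> run_len c p <= M ^ (K - 2).
Proof.
move=> c'_ltK; rewrite ltn_exp2l // leq_exp2l // => lt.
by have := c'_ltK (q %/ T); lia.
Qed.

Lemma offset_bonus_le p q : offset_bonus p q + k1 <= bonus_bound.
Proof.
rewrite /offset_bonus /bonus_bound.
case: ifP => [lt1|_]; last case: ifP => [lt2|_].
- rewrite -mulnSr leq_mul2l; apply/orP; right.
  by apply: leq_trans (run_len_lt_bound c2_ltK lt1); rewrite ltn_mod run_len_gt0.
- rewrite -mulnSr leq_mul2l; apply/orP; right.
  by apply: leq_trans (run_len_lt_bound c1_ltK lt2); rewrite ltn_mod run_len_gt0.
- by rewrite add0n leq_pmulr // expn_gt0 (ltnW M_gt1).
Qed.

Lemma run_start_le c p : run_start c p <= p.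
Proof. by rewrite /run_start mulnC leq_divM. Qed.

Lemma run_start_mono c p p' : (forall i, c i < K) -> p <= p' ->
  run_start c p <= run_start c p'.
Proof.
move=> c_ltK le_pp'.
have [same|new] := eqVneq (p %/ T) (p' %/ T).
  by rewrite /run_start /run_len same leq_mul2l leq_div2r ?orbT.
have lt_block : p %/ T < p' %/ T by rewrite ltn_neqAle new leq_div2r.
have p_lt : p < (p %/ T).+1 * T by rewrite ltn_ceil // T_gt0.
have block_le : (p %/ T).+1 * T <= p' %/ T * T by rewrite leq_mul2r lt_block orbT.
suff : p' %/ T * T <= run_start c p'.
  apply: leq_trans; apply: leq_trans (run_start_le c p) _.
  exact: leq_trans (ltnW p_lt) block_le.
have dvd : run_len c p' %| p' %/ T * T by apply: dvdn_mull; apply: run_len_dvdT.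
rewrite /run_start -{1}(divnK dvd) mulnC leq_mul2l; apply/orP; right.
by apply: leq_div2r; rewrite leq_divM.
Qed.

Lemma pos_step_gain p q p' q' : p < p' -> q < q' -> M * (p + q) + M * 2 <= M * (p' + q').
Proof. by move=> lt_pp' lt_qq'; rewrite -mulnDr leq_mul2l addn2 -addSn -addnS leq_add ?orbT. Qed.

Lemma run_start_add_mono p q p' q' : p <= p' -> q <= q' ->
  k1 * (run_start c1 p + run_start c2 q) <= k1 * (run_start c1 p' + run_start c2 q').
Proof.
by move=> le_pp' le_qq'; rewrite leq_mul2l leq_add ?run_start_mono ?orbT.
Qed.

(* A change of block pays M * bonus_bound, enough to cover the lost
   offset bonus. *)
Lemma potential_step_new_block p q p' q' : p < p' -> q < q' ->
  p %/ T + q %/ T < p' %/ T + q' %/ T -> potential p q + M * k1.+2 <= potential p' q'.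
Proof.
move=> lt_pp' lt_qq' lt_blocks.
have gain_blocks : M * bonus_bound * (p %/ T + q %/ T) + M * bonus_bound <=
    M * bonus_bound * (p' %/ T + q' %/ T) by rewrite -mulnSr leq_mul2l lt_blocks orbT.
have gain_pos := pos_step_gain lt_pp' lt_qq'.
have loss_bonus : M * offset_bonus p q + M * k1 <= M * bonus_bound.
  by rewrite -mulnDr leq_mul2l offset_bonus_le orbT.
have := run_start_add_mono (ltnW lt_pp') (ltnW lt_qq').
move: gain_blocks gain_pos loss_bonus; rewrite /potential.
move: (p %/ T + q %/ T) (p' %/ T + q' %/ T) => b b'; clear; lia.
Qed.

Lemma potential_step_same_blocks p q p' q' : p < p' -> q < q' ->
  p %/ T = p' %/ T -> q %/ T = q' %/ T ->
  enc_sym c1 p = enc_sym c2 q -> enc_sym c1 p' = enc_sym c2 q' ->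
  potential p q + M * k1.+2 <= potential p' q' + M * k1 * same_block p q.
Proof.
move=> lt_pp' lt_qq' same1 same2.
have [r1 r2] : run_len c1 p' = run_len c1 p /\ run_len c2 q' = run_len c2 q.
  by rewrite /run_len same1 same2.
rewrite /potential /offset_bonus /enc_sym /run_start -same1 -same2 r1 r2.
have mono1 : run_len c1 p * (p %/ run_len c1 p) <= run_len c1 p * (p' %/ run_len c1 p).
  by rewrite leq_mul2l leq_div2r ?orbT // ltnW.
have mono2 : run_len c2 q * (q %/ run_len c2 q) <= run_len c2 q * (q' %/ run_len c2 q).
  by rewrite leq_mul2l leq_div2r ?orbT // ltnW.
move: (p %/ T + q %/ T) => b.
case: ltngtP => [lt12|lt21|eq12] e e'.
- have := short_run_step (run_len_gt0 c1 p) (run_len_gt0 c2 q) (run_len_ltE lt12)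
    lt_pp' lt_qq' e e'.
  move: (leq_mul (leqnn k1) mono1) (leq_mul (leqnn k1) mono2).
  move: (p %% run_len c1 p) (p' %% run_len c1 p) (run_len c1 p * (p %/ run_len c1 p))
    (run_len c1 p * (p' %/ run_len c1 p)) (run_len c2 q * (q %/ run_len c2 q))
    (run_len c2 q * (q' %/ run_len c2 q)) => o o' A A' B B'.
  clear; lia.
- have := short_run_step (run_len_gt0 c2 q) (run_len_gt0 c1 p) (run_len_ltE lt21) lt_qq' lt_pp'
    (esym e) (esym e').
  move: (leq_mul (leqnn k1) mono1) (leq_mul (leqnn k1) mono2).
  move: (q %% run_len c2 q) (q' %% run_len c2 q) (run_len c1 p * (p %/ run_len c1 p))
    (run_len c1 p * (p' %/ run_len c1 p)) (run_len c2 q * (q %/ run_len c2 q))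
    (run_len c2 q * (q' %/ run_len c2 q)) => o o' A A' B B'.
  clear; lia.
- have -> : same_block p q by move/eqP: eq12; rewrite eqn_exp2l.
  have := pos_step_gain lt_pp' lt_qq'.
  move: (leq_mul (leqnn k1) mono1) (leq_mul (leqnn k1) mono2); rewrite eq12.
  move: (run_len c2 q * (p %/ run_len c2 q)) (run_len c2 q * (p' %/ run_len c2 q))
    (run_len c2 q * (q %/ run_len c2 q)) (run_len c2 q * (q' %/ run_len c2 q)) => A A' B B'.
  clear; lia.
Qed.

Lemma potential_step p q p' q' : p < p' -> q < q' ->
  enc_sym c1 p = enc_sym c2 q -> enc_sym c1 p' = enc_sym c2 q' ->
  potential p q + M * k1.+2 <= potential p' q' + M * k1 * same_block p q.
Proof.
move=> lt_pp' lt_qq'.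
have [/andP[/eqP same1 /eqP same2]|new] :=
  boolP ((p %/ T == p' %/ T) && (q %/ T == q' %/ T)); first exact: potential_step_same_blocks.
move=> _ _; apply: leq_trans (leq_addr _ _).
apply: potential_step_new_block => //.
have le1 : p %/ T <= p' %/ T by apply/leq_div2r/ltnW.
have le2 : q %/ T <= q' %/ T by apply/leq_div2r/ltnW.
move: new le1 le2; rewrite negb_and.
by move: (p %/ T) (p' %/ T) (q %/ T) (q' %/ T) => a a' b b'; case/orP=> /eqP; lia.
Qed.

Definition matched (x : nat * nat) := enc_sym c1 x.1 == enc_sym c2 x.2.

Lemma potential_path x s : path both_lt x s -> all matched (x :: s) ->
  potential x.1 x.2 + M * k1.+2 * size s <=
  potential (last x s).1 (last x s).2 + M * k1 * count (fun y => same_block y.1 y.2) (x :: s).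
Proof.
elim: s x => [|y s IH] x; first by rewrite /= muln0 addn0 leq_addr.
move=> /andP[/andP[lt1 lt2] y_path] /andP[/eqP x_matched ys_matched].
have /andP[/eqP y_matched _] := ys_matched.
have := potential_step lt1 lt2 x_matched y_matched.
have := IH y y_path ys_matched.
pose P (z : nat * nat) := same_block z.1 z.2.
rewrite (_ : count P (x :: y :: s) = same_block x.1 x.2 + count P (y :: s)) //.
rewrite -[size (y :: s)]/((size s).+1).
move: (potential _ _) (potential _ _) (potential _ _) (same_block _ _ : nat) (count _ (y :: s))
  (size s) => a b c d e n; clear; lia.
Qed.

Lemma potential_ge p q : M * (p + q) <= potential p q.
Proof. by rewrite /potential -!addnA leq_addr. Qed.

Lemma potential_le p q : potential p q <=
  M * (p + q) + M * bonus_bound + k1 * (p + q) + M * bonus_bound * (p %/ T + q %/ T).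
Proof.
rewrite /potential leq_add2r -!addnA leq_add2l.
apply: leq_add; rewrite leq_mul2l; apply/orP; right.
  exact: leq_trans (leq_addr _ _) (offset_bonus_le p q).
by apply: leq_add; apply: run_start_le.
Qed.

Lemma matching_size_bound n L x s : path both_lt x s -> all matched (x :: s) ->
  (last x s).1 < n * T -> (last x s).2 < n * T ->
  count (fun y => same_block y.1 y.2) (x :: s) <= 2 * T * L ->
  M * k1.+2 * (size s).+1 <=
    M * (((last x s).1 - x.1).+1 + ((last x s).2 - x.2).+1) + M * k1
    + 2 * M * bonus_bound * n + 2 * k1 * (n * T) + 2 * M * k1 * T * L.
Proof.
move=> x_path all_matched lt1 lt2 same_le.
have := potential_path x_path all_matched.
have := potential_ge x.1 x.2.
have := potential_le (last x s).1 (last x s).2.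
have [le1 le2] := path_both_lt_last x_path.
have blocks : (last x s).1 %/ T + (last x s).2 %/ T < 2 * n.
  by rewrite -!ltn_divLR ?T_gt0 // in lt1 lt2; lia.
have := leq_mul (leqnn (M * bonus_bound)) blocks.
have := leq_mul (leqnn (M * k1)) same_le.
have := leq_mul (leqnn k1) (leq_add (ltnW lt1) (ltnW lt2)).
have span_eq : M * (((last x s).1 - x.1).+1 + ((last x s).2 - x.2).+1) + M * (x.1 + x.2)
    = M * ((last x s).1 + (last x s).2) + M * 2.
  by rewrite -!mulnDr; congr (M * _); lia.
move: span_eq.
move: ((last x s).1 %/ T + (last x s).2 %/ T) (count _ _) => b c.
move: (last x s).1 (last x s).2 (((last x s).1 - x.1).+1 + ((last x s).2 - x.2).+1) => l1 l2 sp.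
move: (potential _ _) (potential _ _) => pl px.
clear; lia.
Qed.

Lemma encoded_match_bound n L (w1 w2 : seq nat) (m1 m2 : bitseq) :
  size w1 = n * T -> size w2 = n * T ->
  (forall p, p < n * T -> nth 0 w1 p = enc_sym c1 p) ->
  (forall p, p < n * T -> nth 0 w2 p = enc_sym c2 p) ->
  size m1 = size w1 -> size m2 = size w2 -> mask m1 w1 = mask m2 w2 ->
  (forall I J, sorted ltn I -> sorted ltn J -> map c1 I = map c2 J ->
     all (gtn n) I -> all (gtn n) J -> size I <= L) ->
  M * k1.+2 * size (mask m1 w1) <=
    M * (span_mask m1 + span_mask m2) + M * k1
    + 2 * M * bonus_bound * n + 2 * k1 * (n * T) + 2 * M * k1 * T * L.
Proof.
move=> size_w1 size_w2 w1_enc w2_enc size_m1 size_m2 mask_eq chain_le.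
have pairs_lt := match_pairs_lt size_m1 size_m2.
have pairs_matched := match_pairs_matched 0 size_m1 size_m2 mask_eq.
have pairs_sorted := sorted_match_pairs 0 size_m1 size_m2 mask_eq.
rewrite size_w1 size_w2 in pairs_lt.
rewrite -(size_match_pairs 0 size_m1 size_m2 mask_eq).
case pairs_eq: (match_pairs m1 m2) => [|x s] in pairs_lt pairs_matched pairs_sorted *.
  by rewrite muln0.
have [-> ->] := span_match_pairs 0 size_m1 size_m2 mask_eq pairs_eq.
have all_matched : all matched (x :: s).
  apply/allP=> y y_in; have /andP[y1_lt y2_lt] := allP pairs_lt y y_in.
  by rewrite /matched -w1_enc // -w2_enc //; apply: (allP pairs_matched).
have /andP[l1_lt l2_lt] := allP pairs_lt _ (mem_last x s).
have [I [J [[I_sorted J_sorted] IJ_eq I_sub J_sub same_le]]] :=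
  same_block_chain c1 c2 T_gt0 pairs_sorted.
have block_lt (i : nat) : i < n * T -> gtn n (i %/ T) by rewrite /= ltn_divLR // T_gt0.
have I_lt : all (gtn n) I.
  apply/allP=> i /I_sub /mapP[y /(allP pairs_lt) /andP[y1_lt _] ->]; exact: block_lt.
have J_lt : all (gtn n) J.
  apply/allP=> j /J_sub /mapP[y /(allP pairs_lt) /andP[_ y2_lt] ->]; exact: block_lt.
apply: matching_size_bound => //.
by apply: leq_trans same_le _; rewrite leq_mul2l (chain_le I J) ?orbT.
Qed.

End Potential.

(** * The encoding *)

Lemma size_flatten_uniform (A : Type) (T : nat) (ss : seq (seq A)) :
  all (fun s => size s == T) ss -> size (flatten ss) = size ss * T.
Proof.
by elim: ss => //= s ss IH /andP[/eqP size_s /IH size_ss]; rewrite size_cat size_s size_ss mulSn.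
Qed.

Lemma nth_flatten_uniform (A : Type) (x0 : A) (T : nat) (ss : seq (seq A)) p :
  all (fun s => size s == T) ss -> p < size ss * T ->
  nth x0 (flatten ss) p = nth x0 (nth [::] ss (p %/ T)) (p %% T).
Proof.
elim: ss p => [|s ss IH] p //= /andP[/eqP size_s size_ss] p_lt.
rewrite nth_cat size_s; case: (ltnP p T) => [lt_pT|le_Tp].
  by rewrite divn_small // modn_small.
have T_gt0 : 0 < T by move: p_lt; rewrite mulSn; lia.
rewrite -(subnK le_Tp) divnDr ?dvdnn // divnn T_gt0 addn1 modnDr addnK /=.
by apply: IH => //; move: p_lt; rewrite mulSn; lia.
Qed.

Lemma modn_div_mod (p T r k : nat) : k * r %| T -> 0 < r ->
  ((p %% T) %/ r) %% k = (p %/ r) %% k.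
Proof.
move=> /dvdnP[j ->] r_gt0.
have dvd_r : r %| p %/ (j * (k * r)) * (j * (k * r)) by rewrite !mulnA dvdn_mull.
rewrite {2}(divn_eq p (j * (k * r))) divnDl // !mulnA mulnK // modnMDl //.
Qed.

Definition nat_word (K : nat) (c : seq 'I_K) (i : nat) : nat := nth 0 (map val c) i.

Lemma nat_word_lt (K : nat) (c : seq 'I_K) i : 0 < K -> nat_word c i < K.
Proof.
move=> K_gt0; rewrite /nat_word; case: (ltnP i (size c)) => [lt_ic|le_ci].
  have : nth 0 (map val c) i \in map val c by rewrite mem_nth ?size_map.
  by case/mapP=> a _ ->; apply: ltn_ord.
by rewrite nth_default ?size_map.
Qed.

Section Encoding.
Variables (k1 M K T : nat).
Hypotheses (k1_gt0 : 0 < k1) (M_gt1 : 1 < M) (T_def : T = k1.+1 * M ^ K.-1).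

Definition tau_seq (a : nat) : seq 'I_k1.+1 :=
  mkseq (fun i => inord ((i %/ M ^ a) %% k1.+1)) T.

Lemma size_tau_seq a : size (tau_seq a) == T.
Proof. by rewrite size_mkseq. Qed.

Definition tau (a : 'I_K) : T.-tuple 'I_k1.+1 := Tuple (size_tau_seq a).

(* Position M ^ a starts the second run of tau a but still lies in the first
   run of tau b for b > a. *)
Lemma tau_inj : injective tau.
Proof.
suff tau_neq (a b : 'I_K) : a < b -> tau a != tau b.
  move=> a b tau_ab; apply: val_inj.
  by case: (ltngtP a b) => // /tau_neq; rewrite tau_ab eqxx.
move=> lt_ab; apply/negP=> /eqP.
move=> /(congr1 (fun t : T.-tuple _ => val (nth ord0 (val t) (M ^ a)))).
have pos_lt : M ^ a < T.
  rewrite T_def; apply: (@leq_trans (M ^ K.-1)); last exact: leq_pmull.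
  by rewrite ltn_exp2l // -ltnS (ltn_predK (ltn_ord b)) (leq_ltn_trans lt_ab (ltn_ord b)).
rewrite /= /tau_seq !nth_mkseq // !inordK ?ltn_mod // divnn expn_gt0 (ltnW M_gt1) /=.
by rewrite divn_small ?ltn_exp2l // mod0n modn_small.
Qed.

Lemma size_encode (c : seq 'I_K) : size (encode tau c) = size c * T.
Proof.
rewrite (@size_flatten_uniform _ T) ?size_map //.
by apply/allP=> s /mapP[a _ ->]; rewrite size_tuple.
Qed.

Lemma nth_encode (c : seq 'I_K) p : p < size c * T ->
  val (nth ord0 (encode tau c) p) = enc_sym k1 M T (nat_word c) p.
Proof.
case: c => [|a0 c] p_lt; first by rewrite mul0n in p_lt.
have T_gt0 : 0 < T by move: p_lt; rewrite mulSn; lia.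
have blk_lt : p %/ T < size (a0 :: c) by rewrite ltn_divLR.
rewrite /encode (nth_flatten_uniform _ _ (T := T)) ?size_map //; last first.
  by apply/allP=> s /mapP[a _ ->]; rewrite size_tuple.
rewrite (nth_map a0) // /= /tau_seq nth_mkseq ?ltn_pmod // inordK ?ltn_mod //.
rewrite /enc_sym /run_len /nat_word (nth_map a0) //; apply: modn_div_mod; last first.
  by rewrite expn_gt0 (ltnW M_gt1).
rewrite T_def dvdn_pmul2l // dvdn_exp2l //.
by rewrite -ltnS (ltn_predK (ltn_ord a0)) ltn_ord.
Qed.

End Encoding.

(** * Longest common subsequences *)

Lemma size_mask_le_LCS (A : eqType) (w1 w2 : seq A) (m1 m2 : bitseq) :
  size m1 = size w1 -> size m2 = size w2 -> mask m1 w1 = mask m2 w2 ->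
  size (mask m1 w1) <= LCS w1 w2.
Proof.
move=> /eqP size_m1 /eqP size_m2 mask_eq.
apply: leq_trans (leq_bigmax (Tuple size_m1)) => /=.
by apply: leq_trans (leq_bigmax (Tuple size_m2)) => /=; rewrite mask_eq eqxx.
Qed.

Lemma LCS_le_size (A : eqType) (w1 w2 : seq A) : LCS w1 w2 <= size w1.
Proof.
apply/bigmax_leqP=> t1 _; apply/bigmax_leqP=> t2 _; case: ifP => // _.
by rewrite size_mask ?size_tuple // -{2}(size_tuple t1) count_size.
Qed.

Lemma subseq_map_nth (A : eqType) (x0 : A) (s : seq A) (I : seq nat) :
  sorted ltn I -> all (gtn (size s)) I -> subseq (map (nth x0 s) I) s.
Proof.
move=> I_sorted I_lt; rewrite -{2}(mkseq_nth x0 s); apply: map_subseq.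
have -> : I = filter (mem I) (iota 0 (size s)).
  apply: (irr_sorted_eq ltn_trans ltnn) => //.
    by apply: sorted_filter; [exact: ltn_trans | exact: iota_ltn_sorted].
  move=> i; rewrite mem_filter mem_iota /=.
  by case i_I: (i \in I); rewrite //= add0n (allP I_lt i i_I : i < size s).
exact: filter_subseq.
Qed.

Lemma map_nat_word (K : nat) (x0 : 'I_K) (c : seq 'I_K) (I : seq nat) :
  all (gtn (size c)) I -> map val (map (nth x0 c) I) = map (nat_word c) I.
Proof.
move=> I_lt; rewrite -map_comp; apply/eq_in_map => i /(allP I_lt) i_lt.
by rewrite /nat_word (nth_map x0).
Qed.

Lemma size_chain_le_LCS (K n : nat) (c c' : seq 'I_K) (I J : seq nat) :
  size c = n -> size c' = n -> sorted ltn I -> sorted ltn J ->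
  map (nat_word c) I = map (nat_word c') J -> all (gtn n) I -> all (gtn n) J ->
  size I <= LCS c c'.
Proof.
move=> size_c size_c' I_sorted J_sorted IJ_eq I_lt J_lt.
case: I => [//|i I] in I_sorted IJ_eq I_lt *.
case: J => [//|j J] in J_sorted IJ_eq J_lt *.
case: c => [|x0 c] in size_c IJ_eq *; first by rewrite -size_c in I_lt.
case: c' => [|y0 c'] in size_c' IJ_eq *; first by rewrite -size_c' in J_lt.
rewrite -size_c in I_lt; rewrite -size_c' in J_lt.
have nth_eq : map (nth x0 (x0 :: c)) (i :: I) = map (nth y0 (y0 :: c')) (j :: J).
  by apply: (inj_map val_inj); rewrite !map_nat_word.
have /subseqP[m1 size_m1 e1] := subseq_map_nth x0 I_sorted I_lt.
have /subseqP[m2 size_m2 e2] := subseq_map_nth y0 J_sorted J_lt.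
rewrite -(size_map (nth x0 (x0 :: c))) e1 (size_mask_le_LCS size_m1 size_m2) //.
by rewrite -e1 -e2.
Qed.

Lemma LCS_le_LCS_code (K n : nat) (C1 : {set n.-tuple 'I_K}) (c c' : n.-tuple 'I_K) :
  c \in C1 -> c' \in C1 -> c != c' -> LCS c c' <= LCS_code [seq val c | c <- enum C1].
Proof.
move=> c_in c'_in neq_cc'.
have c_code : val c \in [seq val c | c <- enum C1] by rewrite map_f ?mem_enum.
have c'_code : val c' \in [seq val c | c <- enum C1] by rewrite map_f ?mem_enum.
have neq_val : val c' != val c by rewrite (inj_eq val_inj) eq_sym.
apply: leq_trans (leq_bigmax_seq _ c_code isT).
exact: (@leq_bigmax_seq _ _ (fun w => w != val c) _ _ c'_code neq_val).
Qed.

Lemma LCS_code_le_size (K n : nat) (C1 : {set n.-tuple 'I_K}) :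
  LCS_code [seq val c | c <- enum C1] <= n.
Proof.
apply/bigmax_leqP_seq=> _ /mapP[c _ ->] _; apply/bigmax_leqP_seq=> w _ _.
by apply: leq_trans (LCS_le_size _ _) _; rewrite size_tuple.
Qed.

(** * Real bounds *)

Import Order.TTheory GRing.Theory Num.Theory.
Local Open Scope ring_scope.

Lemma natr_bigmax_le (R : realDomainType) (I : eqType) (r : seq I) (P : pred I)
    (F : I -> nat) (B : R) :
  0 <= B -> (forall i, i \in r -> P i -> (F i)%:R <= B) ->
  (\big[maxn/0%N]_(i <- r | P i) F i)%:R <= B.
Proof.
move=> B_ge0 F_le; rewrite big_seq_cond; elim/big_ind: _ => // [x y x_le y_le|i /andP[]].
  by case: (leqP x y) => le; rewrite ?(maxn_idPr _) ?(maxn_idPl _) // ltnW.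
exact: F_le.
Qed.

Lemma code_gamma_bounds (R : realFieldType) (K n : nat) (C1 : {set n.-tuple 'I_K}) (gamma : R) :
  0 < gamma -> (1 <= n)%N -> (LCS_code [seq val c | c <- enum C1])%:R = gamma * n%:R ->
  1 <= gamma * n%:R /\ gamma <= 1.
Proof.
move=> gamma_gt0 n_gt0 LCS_eq.
have n_gt0R : 0 < n%:R :> R by rewrite ltr0n.
split; first by rewrite -LCS_eq ler1n -(ltr0n R) LCS_eq mulr_gt0.
by rewrite -(ler_pM2r n_gt0R) mul1r -LCS_eq ler_nat LCS_code_le_size.
Qed.

(* M is the largest integer below lambda = 2 k / gamma. A real field need not
   be archimedean: the code C0 witnessing gamma n0 >= 1 bounds lambda by 2 k n0. *)
Lemma exists_run_base (R : realFieldType) (k1 n0 : nat) (gamma : R) :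
  0 < gamma -> 1 <= gamma * n0%:R -> gamma <= 1 ->
  exists M : nat, [/\ (2 <= M)%N, M%:R <= 2 * k1.+1%:R / gamma & k1.+1%:R <= M%:R * gamma].
Proof.
move=> gamma_gt0 gamma_n0 gamma_le1.
set lambda := 2 * k1.+1%:R / gamma.
have k_ge1 : 1 <= k1.+1%:R :> R by rewrite ler1n.
have lambda_ge : 2 * k1.+1%:R <= lambda.
  by rewrite ler_pdivlMr //; nra.
have lambda_le : lambda <= (2 * k1.+1 * n0)%:R.
  by rewrite ler_pdivrMr // !natrM; nra.
have ex_le : exists m : nat, m%:R <= lambda by exists 0%N; apply: le_trans lambda_ge; lra.
have le_bound (m : nat) : m%:R <= lambda -> (m <= 2 * k1.+1 * n0)%N.
  by move=> m_le; rewrite -(ler_nat R); apply: le_trans lambda_le.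
have [M M_le M_max] := ex_maxnP ex_le le_bound.
exists M; split => //.
- by apply: M_max; apply: le_trans lambda_ge; rewrite (natrD R 1 1) /=; lra.
- have : lambda < M.+1%:R by rewrite ltNge; apply/negP=> /M_max; rewrite ltnn.
  by rewrite ltr_pdivrMr // -addn1 natrD; nra.
Qed.

Lemma block_length_le (R : realFieldType) (k1 M K : nat) (lambda : R) :
  (1 <= K)%N -> M%:R <= lambda -> k1.+1%:R <= lambda ->
  (k1.+1 * M ^ K.-1)%:R <= 32 * lambda ^+ K.
Proof.
move=> K_ge1 M_le k_le.
have lambda_ge0 : 0 <= lambda by apply: le_trans M_le.
rewrite natrM natrX -[in lambda ^+ K](prednK K_ge1) exprS mulrA.
apply: ler_pM => //; first exact: exprn_ge0; first lra.
by rewrite lerXn2r ?nnegrE.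
Qed.

Lemma span_bound_real (R : realFieldType) (k1 M P n l sp L : nat) (gamma : R) :
  (0 < k1)%N -> (0 < P)%N -> 0 < gamma -> 1 <= gamma * n%:R ->
  k1.+1%:R <= M%:R * gamma -> L%:R <= gamma * n%:R ->
  (M * k1.+2 * l <= M * sp + M * k1 + 2 * M * (k1 * P) * n
     + 2 * k1 * (n * (k1.+1 * (M * P))) + 2 * M * k1 * (k1.+1 * (M * P)) * L)%N ->
  k1.+2%:R * l%:R - 4 * gamma * k1.+1%:R * (n * (k1.+1 * (M * P)))%:R <= sp%:R.
Proof.
move=> k1_gt0 P_gt0 gamma_gt0 gamma_n k_le L_le.
have M_ge1 : 1 <= M%:R :> R.
  rewrite ler1n lt0n; apply/eqP=> M0; move: k_le; rewrite M0 mul0r.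
  by have := ltr0Sn R k1; lra.
have k_ge1 : 1 <= k1%:R :> R by rewrite ler1n.
have p_ge1 : 1 <= P%:R :> R by rewrite ler1n.
have e2 : k1.+2%:R = k1%:R + 2 :> R by rewrite -addn2 natrD.
have e1 : k1.+1%:R = k1%:R + 1 :> R by rewrite -addn1 natrD.
rewrite -(ler_nat R) !natrD !natrM e2 e1; rewrite e1 in k_le.
move: (k1%:R) (M%:R) (P%:R) (n%:R) (l%:R) (sp%:R) (L%:R) (ler0n R n)
  k_ge1 p_ge1 M_ge1 k_le gamma_n L_le
  => k m p nn ll s LL nn_ge0 k_ge1 p_ge1 m_ge1 k_le gamma_n L_le H.
set T := (k + 1) * (m * p); set N := nn * T.
have T_ge2 : 2 <= T.
  have mp_ge1 : 1 * 1 <= m * p by apply: ler_pM; lra.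
  have : 2 * 1 <= T by apply: ler_pM; lra.
  by rewrite mulr1.
have N_ge0 : 0 <= N by apply: mulr_ge0 => //; lra.
have gN_ge2 : 2 <= gamma * N by rewrite /N mulrA; nra.
have f1 : 2 * m * k * T * LL <= 2 * m * k * T * (gamma * nn).
  by rewrite ler_wpM2l // !mulr_ge0 //; lra.
have f2 : 2 * m * T * (gamma * nn) * k <= 2 * m * T * (gamma * nn) * (k + 1).
  by rewrite ler_wpM2l ?mulr_ge0 //; lra.
have f3 : 2 * k * N <= (k + 1) * (k + 1) * N by rewrite ler_wpM2r //; nra.
have f4 : (k + 1) * ((k + 1) * N) <= m * gamma * ((k + 1) * N).
  by rewrite ler_wpM2r // mulr_ge0 //; lra.
have f5 : 0 <= nn * m * p by rewrite !mulr_ge0 //; lra.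
have f6 : 4 * N <= (k + 1) * (k + 1) * N by rewrite ler_wpM2r //; nra.
have f7 : m * (k + 1) * 2 <= m * (k + 1) * (gamma * N) by rewrite ler_wpM2l // mulr_ge0; lra.
rewrite -(ler_pM2l (_ : 0 < m)); last lra.
rewrite /N /T in f1 f2 f3 f4 f5 f6 f7 H *.
lra.
Qed.

Lemma LCS_code_le_of_span (R : realFieldType) (A : eqType) (C : seq (seq A)) (k N : nat)
    (gamma : R) :
  0 <= gamma -> (forall w, w \in C -> size w = N) ->
  (forall w1 w2 m1 m2, w1 \in C -> w2 \in C -> w1 != w2 -> is_common_subseq w1 w2 m1 m2 ->
     k.+1%:R * (cs_len w1 m1)%:R - 4 * gamma * k%:R * N%:R <= (cs_span m1 m2)%:R) ->
  (LCS_code C)%:R <= (2 + 4 * gamma * k%:R) / k.+1%:R * N%:R.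
Proof.
move=> gamma_ge0 size_C span_ge.
have k_gt0 : 0 < k.+1%:R :> R by rewrite ltr0Sn.
have bound_ge0 : 0 <= (2 + 4 * gamma * k%:R) / k.+1%:R * N%:R.
  apply/mulr_ge0/ler0n; apply/divr_ge0/ler0n.
  have : 0 <= gamma * k%:R by rewrite mulr_ge0.
  lra.
apply: natr_bigmax_le => // w1 w1_in _; apply: natr_bigmax_le => // w2 w2_in neq_w21.
rewrite /LCS; apply: natr_bigmax_le => // t1 _ _; apply: natr_bigmax_le => // t2 _ _.
case: (mask t1 w1 =P mask t2 w2) => [mask_eq|_]; last by [].
have cs : is_common_subseq w1 w2 t1 t2 by rewrite /is_common_subseq !size_tuple !eqxx mask_eq /=.
have neq_w12 : w1 != w2 by rewrite eq_sym.
have := span_ge w1 w2 t1 t2 w1_in w2_in neq_w12 cs.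
have : (cs_span t1 t2 <= 2 * N)%N.
  rewrite /cs_span mul2n -addnn leq_add //.
    by apply: leq_trans (span_mask_le t1) _; rewrite size_tuple (size_C _ w1_in).
  by apply: leq_trans (span_mask_le t2) _; rewrite size_tuple (size_C _ w2_in).
rewrite -(ler_nat R) natrM /cs_len => span_le len_le.
rewrite [X in _ <= X]mulrAC ler_pdivlMr //.
move: span_le len_le; move: (cs_span t1 t2)%:R (size (mask t1 w1))%:R => sp l; lra.
Qed.

Lemma LCS_ratio_lt (R : realFieldType) (k N : nat) (gamma : R) : 0 < gamma -> (0 < N)%N ->
  (2 + 4 * gamma * k%:R) / k.+1%:R * N%:R < (2 / k.+1%:R + 4 * gamma) * N%:R.
Proof.
move=> gamma_gt0 N_gt0; rewrite ltr_pM2r ?ltr0n // mulrDl ltrD2l.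
by rewrite ltr_pdivrMr ?ltr0Sn // ltr_pM2l ?mulr_gt0 // ltr_nat.
Qed.

Lemma encoded_span_bound (R : realFieldType) (K k1 M T n : nat) (gamma : R)
    (C1 : {set n.-tuple 'I_K}) :
  (0 < k1)%N -> (1 < M)%N -> (2 <= K)%N -> T = (k1.+1 * M ^ K.-1)%N ->
  0 < gamma -> 1 <= gamma * n%:R -> k1.+1%:R <= M%:R * gamma ->
  (LCS_code [seq val c | c <- enum C1])%:R <= gamma * n%:R ->
  forall (w1 w2 : seq 'I_k1.+1) (m1 m2 : bitseq),
    w1 \in [seq encode (tau k1 M T) (val c) | c <- enum C1] ->
    w2 \in [seq encode (tau k1 M T) (val c) | c <- enum C1] -> w1 != w2 ->
    is_common_subseq w1 w2 m1 m2 ->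
    k1.+2%:R * (cs_len w1 m1)%:R - 4 * gamma * k1.+1%:R * (n * T)%:R <= (cs_span m1 m2)%:R.
Proof.
move=> k1_gt0 M_gt1 K_ge2 T_def gamma_gt0 gamma_n k_le LCS_le w1 w2 m1 m2.
move=> /mapP[c c_in ->] /mapP[c' c'_in ->] neq /and3P[/eqP size_m1 /eqP size_m2 /eqP mask_eq].
rewrite !mem_enum in c_in c'_in.
have neq_cc' : c != c' by apply: contraNneq neq => ->.
have LCS_cc' : (LCS c c')%:R <= gamma * n%:R.
  by apply: le_trans LCS_le; rewrite ler_nat LCS_le_LCS_code.
pose v (c : n.-tuple 'I_K) := map val (encode (tau k1 M T) (val c)).
have size_v (d : n.-tuple 'I_K) : size (v d) = (n * T)%N.
  by rewrite size_map size_encode size_tuple.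
have nth_v (d : n.-tuple 'I_K) p :
    (p < n * T)%N -> nth 0%N (v d) p = enc_sym k1 M T (nat_word d) p.
  by move=> p_lt; rewrite (nth_map ord0) ?nth_encode ?size_encode ?size_tuple.
have word_lt (d : n.-tuple 'I_K) i : (nat_word d i < K)%N by rewrite nat_word_lt // ltnW.
have := encoded_match_bound M_gt1 T_def (word_lt c) (word_lt c')
  (size_v c) (size_v c') (nth_v c) (nth_v c') _ _ _
  (fun I J => size_chain_le_LCS (size_tuple c) (size_tuple c')).
move=> /(_ m1 m2); rewrite /v !size_map -!map_mask mask_eq size_map.
move=> /(_ size_m1 size_m2 erefl); rewrite /cs_len /cs_span mask_eq.
move: (size (mask m2 _)) (span_mask m1 + span_mask m2) => l sp.
have T_eq : T = (k1.+1 * (M * M ^ (K - 2)))%N.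
  by rewrite T_def -expnS; congr (_ * M ^ _)%N; lia.
rewrite /bonus_bound T_eq => bound.
by apply: span_bound_real bound; rewrite ?expn_gt0 ?(ltnW M_gt1).
Qed.

Theorem theorem3p2 (R : realFieldType) (K k : nat) (gamma : R) :
  (2 <= K)%N -> (2 <= k)%N -> 0 < gamma ->
  exists T : nat, T%:R <= 32 * (2 * k%:R / gamma) ^+ K /\
  forall (n : nat) (C1 : {set n.-tuple 'I_K}),
    (1 <= n)%N -> (1 < #|C1|)%N ->
    (LCS_code [seq val c | c <- enum C1])%:R = gamma * n%:R ->
    exists tau : 'I_K -> T.-tuple 'I_k,
      injective tau /\
      let C2 := [seq encode tau (val c) | c <- enum C1] in
      let N := (n * T)%N in
      (forall (w1 w2 : seq 'I_k) (m1 m2 : bitseq),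
          w1 \in C2 -> w2 \in C2 -> w1 != w2 ->
          is_common_subseq w1 w2 m1 m2 ->
          (cs_span m1 m2)%:R >= k.+1%:R * (cs_len w1 m1)%:R - 4 * gamma * k%:R * N%:R) /\
      (LCS_code C2)%:R <= (2 + 4 * gamma * k%:R) / k.+1%:R * N%:R /\
      (LCS_code C2)%:R < (2 / k.+1%:R + 4 * gamma) * N%:R.
Proof.
move=> K_ge2 k_ge2 gamma_gt0.
(* Without any code of relative LCS gamma the claim is vacuous; with one, gamma
   is bounded below, which the choice of M needs. *)
have [[n0 [C0 [n0_gt0 LCS_C0]]]|no_code] := classic (exists n0 (C0 : {set n0.-tuple 'I_K}),
    (1 <= n0)%N /\ (LCS_code [seq val c | c <- enum C0])%:R = gamma * n0%:R); last first.
  exists 0%N; split.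
    by apply: mulr_ge0 => //; apply/exprn_ge0/divr_ge0; [rewrite mulr_ge0 | exact: ltW].
  by move=> n C1 n_gt0 _ LCS_eq; case: no_code; exists n, C1.
have [gamma_n0 gamma_le1] := code_gamma_bounds gamma_gt0 n0_gt0 LCS_C0.
case: k k_ge2 => [//|k1] k_ge2; have k1_gt0 : (0 < k1)%N by [].
have [M [M_ge2 M_le k_le]] := exists_run_base k1 gamma_gt0 gamma_n0 gamma_le1.
have k_le_M : k1.+1%:R <= M%:R :> R by apply: le_trans k_le _; rewrite ler_piMr.
exists (k1.+1 * M ^ K.-1)%N; split.
  exact: block_length_le (ltnW K_ge2) M_le (le_trans k_le_M M_le).
move=> n C1 n_gt0 _ LCS_eq; set T := (k1.+1 * M ^ K.-1)%N.
have [gamma_n _] := code_gamma_bounds gamma_gt0 n_gt0 LCS_eq.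
have LCS_C1_le : (LCS_code [seq val c | c <- enum C1])%:R <= gamma * n%:R by rewrite LCS_eq.
exists (tau k1 M T); split; first exact: tau_inj.
move=> C2 N.
have span_ge := encoded_span_bound k1_gt0 M_ge2 K_ge2 erefl gamma_gt0 gamma_n k_le LCS_C1_le.
have size_C2 w : w \in C2 -> size w = N by case/mapP=> c _ ->; rewrite size_encode size_tuple.
have LCS_C2_le := LCS_code_le_of_span (ltW gamma_gt0) size_C2 span_ge.
have N_gt0 : (0 < N)%N by rewrite /N /T muln_gt0 n_gt0 muln_gt0 expn_gt0 (ltnW M_ge2).
by do !split => //; apply: le_lt_trans LCS_C2_le (LCS_ratio_lt _ gamma_gt0 N_gt0).
Qed.
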